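(* Let $d\ge1$, let $G=(V,E)$ be a graph on at least $d$ vertices, and let $G'$ be obtained from the cone $G*v$ by deleting $t$ edges incident to $v$. Suppose $G'$ is minimally $\mathcal{R}_{d+1}$-rigid. Then $G$ is $\mathcal{R}_d$-rigid and $|E|=d|V|-\binom{d+1}{2}+t$. Moreover, if $S$ is the set of vertices of $G'$ (other than $v$) that are not adjacent to $v$, then $G-S$ is $\mathcal{R}_d$-independent and each $s\in S$ belongs to an $\mathcal{R}_d$-circuit in $G$.
   Context: For a graph $G=(V,E)$ and a generic $p:V\to\mathbb{R}^d$ (coordinates algebraically independent over $\mathbb{Q}$), the rigidity matrix has a row for each $uv\in E$ with $p(u)-p(v)$ in the $d$ columns of $u$, $p(v)-p(u)$ in those of $v$, zeros elsewhere; $\mathcal{R}_d$ is its row matroid, with rank $r_d$. A graph $H=(W,F)$ is $\mathcal{R}_d$-independent if $r_d(F)=|F|$; $\mathcal{R}_d$-rigid if it is complete on at most $d+1$ vertices or $r_d(F)=d|W|-\binom{d+1}{2}$; minimally $\mathcal{R}_d$-rigid if both. An $\mathcal{R}_d$-circuit is a minimal dependent edge set. The cone $G*v$ is obtained by adding a new vertex $v$ adjacent to every vertex of $G$. *)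

From HB Require Import structures.
From mathcomp Require Import all_boot all_order all_algebra.
From mathcomp Require Import reals.
From mathcomp Require Import mpoly.
Set Implicit Arguments. Unset Strict Implicit. Unset Printing Implicit Defensive.
Import Order.TTheory GRing.Theory Num.Theory.
Local Open Scope ring_scope.

(* Graphs: a finite vertex type V; an edge is a 2-element subset of V;
   an edge set is a {set {set V}}.  Placements p : V -> 'I_d -> R into R^d. *)

Definition is_edge_set (V : finType) (F : {set {set V}}) : Prop :=
  forall e, e \in F -> #|e| = 2%N.

(* the other endpoint of edge e at x (meaningful when x \in e, #|e| = 2) *)
Definition other (V : finType) (e : {set V}) (x : V) : V :=
  odflt x [pick y in e :\ x].

Definition rigrow (R : realType) (V : finType) (d : nat) (p : V -> 'I_d -> R)
  (e : {set V}) (c : V * 'I_d) : R :=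
  if c.1 \in e then p c.1 c.2 - p (other e c.1) c.2 else 0.

Definition rigmx (R : realType) (V : finType) (d : nat) (p : V -> 'I_d -> R)
  (F : {set {set V}}) : 'M[R]_(#|F|, #|{: V * 'I_d}|) :=
  \matrix_(i < #|F|, j < #|{: V * 'I_d}|)
     rigrow p (enum_val i : {set V}) (enum_val j : V * 'I_d).

Definition rig_rank (R : realType) (V : finType) (d : nat) (p : V -> 'I_d -> R)
  (F : {set {set V}}) : nat := \rank (rigmx p F).

Definition coords (R : realType) (V : finType) (d : nat) (p : V -> 'I_d -> R)
  : 'I_#|{: V * 'I_d}| -> R :=
  fun k => let c := (enum_val k : V * 'I_d) in p c.1 c.2.

Definition generic (R : realType) (V : finType) (d : nat) (p : V -> 'I_d -> R)
  : Prop :=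
  forall P : {mpoly rat[#|{: V * 'I_d}|]},
    P != 0 -> mmap (ratr : rat -> R) (coords p) P != 0.

Definition indep (R : realType) (V : finType) (d : nat) (p : V -> 'I_d -> R)
  (F : {set {set V}}) : Prop := rig_rank p F = #|F|.

Definition rigid (R : realType) (V : finType) (d : nat) (p : V -> 'I_d -> R)
  (W : {set V}) (F : {set {set V}}) : Prop :=
  ((forall x y, x \in W -> y \in W -> x != y -> [set x; y] \in F)
     /\ (#|W| <= d.+1)%N)
  \/ (rig_rank p F)%:Z = (d * #|W|)%:Z - ('C(d.+1, 2))%:Z.

Definition min_rigid (R : realType) (V : finType) (d : nat) (p : V -> 'I_d -> R)
  (W : {set V}) (F : {set {set V}}) : Prop :=
  indep p F /\ rigid p W F.

Definition dependent (R : realType) (V : finType) (d : nat) (p : V -> 'I_d -> R)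
  (F : {set {set V}}) : Prop := ~ indep p F.

Definition circuit (R : realType) (V : finType) (d : nat) (p : V -> 'I_d -> R)
  (C : {set {set V}}) : Prop :=
  dependent p C /\ forall C' : {set {set V}}, C' \proper C -> indep p C'.

(* cone G * v on vertex type option V, with v = None *)
Definition cone_edges (V : finType) (E : {set {set V}}) : {set {set option V}} :=
  [set (@Some V) @: (e : {set V}) | e in E] :|: [set [set Some x; None] | x : V].

Definition del_vertices (V : finType) (E : {set {set V}}) (S : {set V})
  : {set {set V}} := [set e in E | [disjoint e & S]].

From HB Require Import structures.
From mathcomp Require Import all_boot all_order all_algebra.
From mathcomp Require Import reals mpoly.
From mathcomp Require Import zify ring.
Set Implicit Arguments. Unset Strict Implicit. Unset Printing Implicit Defensive.
Import Order.TTheory GRing.Theory Num.Theory.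
Local Open Scope ring_scope.

(* Write G' = G * v - T as the cone of G over U = V - S, i.e. G together with
   the apex edges to U.
   Coning: if every edge of G lies in U, the cone of G over U has
   R_{d+1}-rank r_d(G) + |U|; the lower bound comes from lifting a placement
   of G to height 1 with the apex at the origin, the upper bound from central
   projection from the apex.  Trivial motions: D|W| - binom(D+1,2) bounds the
   R_D-rank of any graph on W when D <= |W|.
   Independence of G' restricts, through coning, to independence of G - S.
   If G' is rigid, the rank of G * v is squeezed between r_{d+1}(G') and the
   trivial-motion bound, giving r_d(G) = d|V| - binom(d+1,2); counting the
   independent edges of G' then gives |E|.  For s in S, G' lies in the cone
   over V - s of the edges avoiding s plus the lifts of the edges at s, and
   the same rank count shows that the edges at s are dependent over the rest,
   which yields a circuit through s. *)

Section Entries.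
Variable K : pzRingType.

Definition entry (C : finType) (w : 'rV[K]_#|{: C}|) (c : C) : K :=
  w 0 (enum_rank c).

Definition rowfun (C : finType) (f : C -> K) : 'rV[K]_#|{: C}| :=
  \row_j f (enum_val j).

Definition matfun (C C' : finType) (f : C -> C' -> K) : 'M[K]_(#|{: C}|, #|{: C'}|) :=
  \matrix_(j, k) f (enum_val j) (enum_val k).

Definition select_mx (C C' : finType) (s : C' -> C) : 'M[K]_(#|{: C}|, #|{: C'}|) :=
  matfun (fun c k => (c == s k)%:R).

Lemma sum_pair (A B : finType) (g : A * B -> K) : \sum_c g c = \sum_a \sum_b g (a, b).
Proof. by rewrite pair_bigA; apply: eq_bigr => -[]. Qed.

Lemma sum_option (A : finType) (g : option A -> K) : \sum_y g y = g None + \sum_x g (Some x).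
Proof.
rewrite (bigD1 None) //= (reindex_omap Some id) //=; last by case.
by congr (_ + _); apply: eq_bigl => x; rewrite eqxx.
Qed.

Variables C C' : finType.
Implicit Types w : 'rV[K]_#|{: C}|.

Lemma entry_rowfun (f : C -> K) c : entry (rowfun f) c = f c.
Proof. by rewrite /entry /rowfun mxE enum_rankK. Qed.

Lemma entryP w w' : (forall c, entry w c = entry w' c) -> w = w'.
Proof.
by move=> eq_ww'; apply/rowP => j; have := eq_ww' (enum_val j); rewrite /entry enum_valK.
Qed.

Lemma entry0 c : entry (0 : 'rV[K]_#|{: C}|) c = 0.
Proof. by rewrite /entry mxE. Qed.

Lemma entry_eq0 w : (forall c, entry w c = 0) -> w = 0.
Proof. by move=> w0; apply: entryP => c; rewrite w0 entry0. Qed.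

Lemma entryZ a w c : entry (a *: w) c = a * entry w c.
Proof. by rewrite /entry mxE. Qed.

Lemma entry_sum (I : finType) (P : pred I) (w : I -> 'rV[K]_#|{: C}|) c :
  entry (\sum_(i | P i) w i) c = \sum_(i | P i) entry (w i) c.
Proof. by rewrite /entry summxE. Qed.

Lemma entry_delta (i c : C) :
  entry (delta_mx 0 (enum_rank i) : 'rV[K]_#|{: C}|) c = (c == i)%:R.
Proof. by rewrite /entry mxE eqxx (inj_eq enum_rank_inj). Qed.

Lemma sum_supported1 (g : C -> K) c1 :
  (forall c, c != c1 -> g c = 0) -> \sum_c g c = g c1.
Proof. by move=> g0; rewrite (bigD1 c1) //= big1 ?addr0 // => c /g0. Qed.

Lemma sum_mul_delta (g : C -> K) c1 a : \sum_c g c * ((c == c1)%:R * a) = g c1 * a.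
Proof.
rewrite (sum_supported1 (c1 := c1)) ?eqxx ?mul1r // => c /negbTE ->.
by rewrite mul0r mulr0.
Qed.

Lemma sum_supported2 (g : C -> K) c1 c2 : c1 != c2 ->
  (forall c, c != c1 -> c != c2 -> g c = 0) -> \sum_c g c = g c1 + g c2.
Proof.
move=> c12 g0; rewrite (bigD1 c1) //= (bigD1 c2) /=; last by rewrite eq_sym.
by rewrite big1 ?addr0 // => c /andP[? ?]; apply: g0.
Qed.

Lemma entry_mulmx w (f : C -> C' -> K) c' :
  entry (w *m matfun f) c' = \sum_c entry w c * f c c'.
Proof.
rewrite /entry mxE (reindex (@enum_rank C)) /=; last first.
  by exists (@enum_val C _) => x _; rewrite ?enum_rankK ?enum_valK.
by apply: eq_bigr => c _; rewrite mxE !enum_rankK.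
Qed.

Lemma entry_select w (s : C' -> C) k : entry (w *m select_mx s) k = entry w (s k).
Proof.
rewrite entry_mulmx (sum_supported1 (c1 := s k)) ?eqxx ?mulr1 // => c /negbTE ->.
by rewrite mulr0.
Qed.

End Entries.

Arguments select_mx {K C C'} s.

Lemma card_le_mxrank_delta (K : fieldType) (I : finType) (A : {set I}) m
    (M : 'M[K]_(m, #|{: I}|)) :
  (forall i, i \in A -> ((delta_mx 0 (enum_rank i) : 'rV[K]_#|{: I}|) <= M)%MS) ->
  (#|A| <= \rank M)%N.
Proof.
move=> AM.
have sumM : ((\sum_(i in A) <<delta_mx 0 (enum_rank i) : 'rV[K]_#|{: I}|>>)%MS <= M)%MS.
  by apply/sumsmx_subP => i iA; rewrite genmxE AM.
apply: leq_trans (mxrankS sumM); rewrite (mxdirectP _) /=; last first.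
  exact: mxdirect_delta (in2W (@enum_rank_inj I)).
by rewrite -sum1_card leq_sum // => i _; rewrite mxrank_gen mxrank_delta.
Qed.

Section RowFamily.
Variables (K : fieldType) (T : finType) (n : nat) (r : T -> 'rV[K]_n).
Implicit Types A B C E F X : {set T}.

Definition rowspan F := (\sum_(e in F) <<r e>>)%MS.
Definition rowrank F := \rank (rowspan F).
Definition rowfree F := rowrank F = #|F|.

Lemma rowrank_le_card F : (rowrank F <= #|F|)%N.
Proof.
rewrite /rowrank /rowspan -sum1_card.
elim/big_rec2: _ => [|e k S _ IH]; first by rewrite mxrank0.
apply: leq_trans (mxrank_adds_leqif _ _) _.
by rewrite mxrank_gen leq_add // rank_leq_row.
Qed.

Lemma rowspan_sup F e : e \in F -> (r e <= rowspan F)%MS.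
Proof. by move=> eF; apply: (sumsmx_sup e) => //; rewrite genmxE. Qed.

Lemma rowspan_subP F m (M : 'M_(m, n)) :
  reflect (forall e, e \in F -> (r e <= M)%MS) (rowspan F <= M)%MS.
Proof. by apply: (iffP sumsmx_subP) => rM e /rM; rewrite genmxE. Qed.

Lemma rowspanS F F' : F \subset F' -> (rowspan F <= rowspan F')%MS.
Proof. by move=> /subsetP FF'; apply/rowspan_subP => e /FF'; apply: rowspan_sup. Qed.

Lemma rowrankS F F' : F \subset F' -> (rowrank F <= rowrank F')%N.
Proof. by move=> FF'; apply/mxrankS/rowspanS. Qed.

Lemma rowrankU A B : (rowrank (A :|: B) <= rowrank A + rowrank B)%N.
Proof.
apply: leq_trans (mxrank_adds_leqif _ _); apply: mxrankS.
apply/rowspan_subP => e; rewrite in_setU => /orP[] eAB.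
  by apply: submx_trans (addsmxSl _ _); apply: rowspan_sup.
by apply: submx_trans (addsmxSr _ _); apply: rowspan_sup.
Qed.

Lemma rowfreeS F F' : rowfree F -> F' \subset F -> rowfree F'.
Proof.
rewrite /rowfree => freeF F'F; apply/eqP; rewrite eqn_leq rowrank_le_card /=.
have : F \subset F' :|: (F :\: F') by apply/subsetP => x xF; rewrite !inE xF; case: (x \in F').
move/rowrankS; rewrite freeF => /leq_trans/(_ (rowrankU _ _)).
have := rowrank_le_card (F :\: F'); rewrite cardsD (setIidPr F'F).
have := subset_leq_card F'F; lia.
Qed.

Lemma rowfreeU1 B e : rowfree B -> ~~ (r e <= rowspan B)%MS -> rowfree (e |: B).
Proof.
rewrite /rowfree => freeB reB.
have eB : e \notin B by apply: contra reB => /rowspan_sup.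
have : (rowspan B < rowspan (e |: B))%MS.
  rewrite ltmxE rowspanS ?subsetUr //=; apply: contra reB => /(submx_trans _); apply.
  by apply: rowspan_sup; rewrite setU11.
rewrite ltmxErank => /andP[_ ltB].
have := rowrank_le_card (e |: B); rewrite cardsU1 eB /rowrank in freeB ltB *; lia.
Qed.

Lemma exists_rowbasis X :
  exists2 B : {set T}, B \subset X & rowfree B /\ rowrank B = rowrank X.
Proof.
pose P (B : {set T}) := (B \subset X) && (rowrank B == #|B|).
have P0 : P set0 by rewrite /P sub0set cards0 -leqn0 -(cards0 T) rowrank_le_card.
have [B /andP[BX /eqP freeB] maxB] := arg_maxnP (fun B : {set T} => #|B|) P0.
exists B => //; split => //; apply/eqP; rewrite eqn_leq rowrankS //=.
apply/mxrankS/rowspan_subP => e eX; apply: contraT => reB.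
have eB : e \notin B by apply: contra reB => /rowspan_sup.
have /maxB : P (e |: B) by rewrite /P subUset sub1set eX BX; apply/eqP/rowfreeU1.
by rewrite cardsU1 eB add1n /= ltnn.
Qed.

Lemma exists_minimal_dependent X : ~ rowfree X ->
  exists C : {set T},
    [/\ C \subset X, ~ rowfree C & forall C' : {set T}, C' \proper C -> rowfree C'].
Proof.
move=> depX; pose P (C : {set T}) := (C \subset X) && (rowrank C != #|C|).
have PX : P X by rewrite /P subxx; apply/eqP.
have [C /andP[CX /eqP depC] minC] := arg_minnP (fun C : {set T} => #|C|) PX.
exists C; split => // C' C'C; apply/eqP; apply: contraTT (proper_card C'C) => depC'.
by rewrite -leqNgt minC // /P depC' andbT (subset_trans (proper_sub C'C)).
Qed.

(* Extend a basis of E0 by E :\: E0: the rank deficit makes the result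
   dependent, and none of its circuits lies inside the basis. *)
Lemma exists_circuit_outside E E0 : E0 \subset E ->
  (rowrank E < rowrank E0 + #|E :\: E0|)%N ->
  exists C : {set T}, [/\ C \subset E, ~ rowfree C, forall C' : {set T}, C' \proper C -> rowfree C'
              & exists2 e, e \in C & e \notin E0].
Proof.
move=> E0E ltE; have [B BE0 [freeB rankB]] := exists_rowbasis E0.
pose X := B :|: (E :\: E0).
have XE : X \subset E by rewrite subUset subsetDl (subset_trans BE0).
have depX : ~ rowfree X.
  have BE0' : [disjoint B & E :\: E0].
    by rewrite -setI_eq0 -subset0; apply/subsetP => e; rewrite !inE => /and3P[/(subsetP BE0) ->].
  rewrite /rowfree cardsU (disjoint_setI0 BE0') cards0 subn0 -freeB rankB.
  by have := rowrankS XE; lia.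
have [C [CX depC minC]] := exists_minimal_dependent depX.
exists C; split => //; first exact: subset_trans XE.
have [CB|/subsetPn[e eC eB]] := boolP (C \subset B); first by case: depC; apply: rowfreeS CB.
by exists e => //; move: (subsetP CX e eC); rewrite !inE (negbTE eB) => /andP[].
Qed.

End RowFamily.

(* A maximal nonsingular minor of M at x has a nonzero determinant polynomial,
   so it stays nonsingular at the generic point y. *)
Lemma mxrank_eval_le_generic (R : numFieldType) n (x y : 'I_n -> R) a b
    (M : 'M[{mpoly rat[n]}]_(a, b)) :
  (forall P : {mpoly rat[n]}, P != 0 -> mmap ratr y P != 0) ->
  (\rank (map_mx (mmap ratr x) M) <= \rank (map_mx (mmap ratr y) M))%N.
Proof.
move=> gen_y; set A := map_mx (mmap ratr x) M; set f := maxrankfun A.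
have fullA : row_full (rowsub f A)^T by rewrite /row_full mxrank_tr; apply: maxrowsub_free.
set g := fullrankfun fullA.
pose minor := \matrix_(i, j) M (f j) (g i).
have minor_x : map_mx (mmap ratr x) minor = rowsub g (rowsub f A)^T.
  by apply/matrixP => i j; rewrite !mxE.
have minor_y : map_mx (mmap ratr y) minor = rowsub g (rowsub f (map_mx (mmap ratr y) M))^T.
  by apply/matrixP => i j; rewrite !mxE.
have det_minor : \det minor != 0.
  apply: contraTneq (fullrowsub_unit fullA) => det0.
  by rewrite -minor_x unitmxE det_map_mx det0 rmorph0 unitr0.
have := gen_y _ det_minor; rewrite -det_map_mx -unitfE -unitmxE minor_y => /mxrank_unit.
move=> <-; apply: leq_trans (mxrankS (rowsub_sub _ _)) _.
by rewrite mxrank_tr mxrankS // rowsub_sub.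
Qed.

Lemma other_pair (W : finType) (a b : W) : a != b -> other [set a; b] a = b.
Proof.
move=> ab; rewrite /other (_ : [set a; b] :\ a = [set b]).
  by case: pickP => [y|/(_ b)]; rewrite !inE ?eqxx // => /eqP.
by apply/setP => x; rewrite !inE; case: (eqVneq x a) => // ->; rewrite (negbTE ab).
Qed.

Section RigidityRows.
Variables (R : realType) (W : finType) (D : nat).
Implicit Types (p : W -> 'I_D -> R) (F : {set {set W}}).

Definition rig_vec p (e : {set W}) : 'rV[R]_#|{: W * 'I_D}| := rowfun (rigrow p e).

Lemma rig_rankE p F : rig_rank p F = rowrank (rig_vec p) F.
Proof.
apply/eqP; rewrite eqn_leq; apply/andP; split; apply: mxrankS.
  apply/row_subP => i; rewrite (_ : row i _ = rig_vec p (enum_val i)).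
    by apply: rowspan_sup; apply: enum_valP.
  by apply/rowP => j; rewrite !mxE.
apply/rowspan_subP => e eF; apply: (eq_row_sub (enum_rank_in eF e)).
by apply/rowP => j; rewrite !mxE enum_rankK_in.
Qed.

Lemma indepE p F : indep p F = rowfree (rig_vec p) F.
Proof. by rewrite /indep rig_rankE. Qed.

Lemma rig_rank_le_card p F : (rig_rank p F <= #|F|)%N.
Proof. by rewrite rig_rankE rowrank_le_card. Qed.

Lemma rig_rankS p F F' : F \subset F' -> (rig_rank p F <= rig_rank p F')%N.
Proof. by rewrite !rig_rankE; apply: rowrankS. Qed.

Lemma rig_rankU p F F' : (rig_rank p (F :|: F') <= rig_rank p F + rig_rank p F')%N.
Proof. by rewrite !rig_rankE rowrankU. Qed.

Lemma entry_rig_vec_pair p a b x i : a != b ->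
  entry (rig_vec p [set a; b]) (x, i) =
  if x == a then p a i - p b i else if x == b then p b i - p a i else 0.
Proof.
move=> ab; rewrite entry_rowfun /rigrow !inE /=.
case: (eqVneq x a) => [->|_] /=; first by rewrite other_pair.
by case: (eqVneq x b) => [->|//]; rewrite setUC other_pair // eq_sym.
Qed.

Local Notation N := #|{: W * 'I_D}|.

Definition sym_placement (x : W) (i : 'I_D) : {mpoly rat[N]} := 'X_(enum_rank (x, i)).

Lemma eval_sym_placement p x i : mmap ratr (coords p) (sym_placement x i) = p x i.
Proof. by rewrite mmapX mmap1U /coords enum_rankK. Qed.

Definition sym_rigmx F : 'M[{mpoly rat[N]}]_(#|F|, N) :=
  \matrix_(i < #|F|, j < N) let e : {set W} := enum_val i in let c : W * 'I_D := enum_val j in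
    if c.1 \in e then sym_placement c.1 c.2 - sym_placement (other e c.1) c.2 else 0.

Lemma eval_sym_rigmx p F : map_mx (mmap ratr (coords p)) (sym_rigmx F) = rigmx p F.
Proof.
apply/matrixP => i j; rewrite !mxE /rigrow.
by case: ifP; rewrite ?rmorph0 // rmorphB /= !eval_sym_placement.
Qed.

Lemma rig_rank_le_generic p p' F : generic p -> (rig_rank p' F <= rig_rank p F)%N.
Proof.
by move=> gen_p; rewrite /rig_rank -!eval_sym_rigmx; apply: mxrank_eval_le_generic.
Qed.

End RigidityRows.

(* Velocity of vertex c.1 in direction c.2 under the infinitesimal translation
   along axis k (t = inl k) or rotation in the (k, l)-plane (t = inr (k, l)). *)
Definition motion (K : pzRingType) (W : finType) D (P : W -> 'I_D -> K)
    (t : 'I_D + 'I_D * 'I_D) (c : W * 'I_D) : K :=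
  match t with
  | inl k => (c.2 == k)%:R
  | inr kl => (c.2 == kl.1)%:R * P c.1 kl.2 - (c.2 == kl.2)%:R * P c.1 kl.1
  end.

Definition motion_mx (K : pzRingType) (W : finType) D (P : W -> 'I_D -> K) :
    'M[K]_(#|{: W * 'I_D}|, #|{: 'I_D + 'I_D * 'I_D}|) :=
  matfun (fun c t => motion P t c).

Lemma eval_motion_mx (R : realType) (W : finType) D (p : W -> 'I_D -> R) :
  map_mx (mmap ratr (coords p)) (motion_mx (@sym_placement W D)) = motion_mx p.
Proof.
apply/matrixP => i j; rewrite !mxE /motion.
case: (enum_val j) => [k|kl]; first by rewrite rmorph_nat.
by rewrite rmorphB !rmorphM /= !rmorph_nat !eval_sym_placement.
Qed.

Lemma rig_vec_pair_motion_mx (R : realType) (W : finType) D (q : W -> 'I_D -> R) a b :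
  a != b -> rig_vec q [set a; b] *m motion_mx q = 0.
Proof.
move=> ab; apply: entry_eq0 => t; rewrite entry_mulmx sum_pair.
rewrite (sum_supported2 (c1 := a) (c2 := b)) //= => [|x xa xb]; last first.
  by apply: big1 => i _; rewrite entry_rig_vec_pair // (negbTE xa) (negbTE xb) mul0r.
under eq_bigr do rewrite entry_rig_vec_pair // eqxx.
under [X in _ + X]eq_bigr do rewrite entry_rig_vec_pair // eq_sym (negbTE ab) eqxx.
case: t => [k|[k l]] /=.
  rewrite !(sum_supported1 (c1 := k)) ?eqxx; try by move=> i /negbTE ->; rewrite mulr0.
  by rewrite !mulr1; ring.
rewrite !(eq_bigr _ (fun i _ => mulrBr _ _ _)) !sumrB.
by rewrite !sum_mul_delta; ring.
Qed.

Lemma card_ord_lt_pairs D : #|[set kl : 'I_D * 'I_D | (kl.1 < kl.2)%N]| = 'C(D, 2).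
Proof.
rewrite -sum1dep_card big_mkcond /= -bin2_sum.
rewrite -(pair_big xpredT xpredT (fun k l : 'I_D => if (k < l)%N then 1%N else 0%N)) /=.
rewrite exchange_big /= big_mkord; apply: eq_bigr => l _.
rewrite -(big_mkord xpredT (fun k => if (k < l)%N then 1%N else 0%N)).
rewrite (big_cat_nat (n := l)) //=; last exact: ltnW.
rewrite [X in (_ + X)%N]big1_seq ?addn0; last first.
  by move=> k /andP[_]; rewrite mem_index_iota => /andP[lk _]; rewrite ltnNge lk.
rewrite (eq_big_nat _ _ (F2 := fun _ => 1%N)); last by move=> k /andP[_ ->].
by rewrite sum_nat_const_nat subn0 muln1.
Qed.

Definition motion_basis D : {set 'I_D + 'I_D * 'I_D} :=
  [set t : 'I_D + 'I_D * 'I_D | if t is inr kl then (kl.1 < kl.2)%N else true].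

Lemma card_motion_basis D : #|motion_basis D| = 'C(D.+1, 2).
Proof.
rewrite binS bin1 -card_ord_lt_pairs -sum1_card big_mkcond big_sumType /= addnC.
congr (_ + _)%N; last by rewrite -[RHS]card_ord -sum1_card; apply: eq_bigr => k _; rewrite inE.
by rewrite -sum1dep_card [RHS]big_mkcond; apply: eq_bigr => kl _; rewrite inE.
Qed.

Section StandardPlacement.
Variables (K : fieldType) (W : finType) (D : nat).
Hypotheses (D_gt0 : (0 < D)%N) (D_le_W : (D <= #|W|)%N).

Definition std_vertex (m : 'I_D) : W := enum_val (Ordinal (leq_trans (ltn_ord m) D_le_W)).

Lemma enum_rank_std_vertex m : enum_rank (std_vertex m) = m :> nat.
Proof. by rewrite /std_vertex enum_valK. Qed.

(* The vertex of rank m sits at the m-th unit vector for 0 < m < D; all other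
   vertices, in particular [std_vertex 0], sit at the origin. *)
Definition std_placement (x : W) (i : 'I_D) : K :=
  ((enum_rank x == i :> nat) && (i != 0 :> nat))%:R.

Local Notation x0 := (std_vertex (Ordinal D_gt0)).

Lemma std_placement_x0 i : std_placement x0 i = 0.
Proof. by rewrite /std_placement enum_rank_std_vertex /=; case: eqP => //= <-. Qed.

Lemma std_placement_vertex m i :
  std_placement (std_vertex m) i = ((m == i :> nat) && (i != 0 :> nat))%:R.
Proof. by rewrite /std_placement enum_rank_std_vertex. Qed.

(* [motion_test t] reads off, from a velocity field, the k-th velocity component
   of x0 when t = inl k, and the k-th component of the velocity of vertex l
   relative to x0 when t = inr (k, l). *)
Definition motion_test (t : 'I_D + 'I_D * 'I_D) (c : W * 'I_D) : K :=
  match t with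
  | inl k => (c == (x0, k))%:R
  | inr kl => if (kl.1 < kl.2)%N then (c == (std_vertex kl.2, kl.1))%:R - (c == (x0, kl.1))%:R
              else 0
  end.

Lemma sum_motion_test (f : W * 'I_D -> K) t : \sum_c f c * motion_test t c =
  match t with
  | inl k => f (x0, k)
  | inr kl => if (kl.1 < kl.2)%N then f (std_vertex kl.2, kl.1) - f (x0, kl.1) else 0
  end.
Proof.
have sum_at c1 : \sum_c f c * (c == c1)%:R = f c1.
  by rewrite (sum_supported1 (c1 := c1)) ?eqxx ?mulr1 // => c /negbTE ->; rewrite mulr0.
case: t => [k|kl] /=; first exact: sum_at.
case: ifP => _; last by rewrite big1 // => c _; rewrite mulr0.
by rewrite (eq_bigr _ (fun c _ => mulrBr _ _ _)) sumrB !sum_at.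
Qed.

Lemma motion_test_dual s t : s \in motion_basis D ->
  \sum_c motion std_placement s c * motion_test t c = (t == s)%:R.
Proof.
rewrite sum_motion_test inE; case: s => [j|[k' l']] /= s_basis; case: t => [k|[k l]] //=.
- by case: ifP => _; rewrite ?subrr.
- by rewrite !std_placement_x0 !mulr0 subrr.
rewrite !std_placement_x0 !mulr0 subrr subr0 !std_placement_vertex.
case: ifP => kl; last first.
  rewrite (_ : inr (k, l) == _ :> 'I_D + 'I_D * 'I_D = false) //.
  by apply: contraFF kl => /eqP[-> ->].
have -> : (k == l')%:R * ((l == k') && (k' != 0 :> nat))%:R = 0 :> K.
  case: (eqVneq k l') => [ekl|]; last by rewrite mul0r.
  case: (eqVneq l k') => [elk|]; last by rewrite mulr0.
  by move: kl s_basis; rewrite ekl elk; lia.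
have -> : (l == l') && (l' != 0 :> nat) = (l == l').
  by case: (eqVneq l l') => [<-|] //=; apply/eqP => l0; move: kl; rewrite l0.
have -> : (inr (k, l) == inr (k', l') :> 'I_D + 'I_D * 'I_D) = (k == k') && (l == l') by [].
by case: (k == k'); case: (l == l'); rewrite /= ?mulr1 ?mulr0 ?subr0.
Qed.

Definition motion_test_mx : 'M[K]_(#|{: W * 'I_D}|, #|{: 'I_D + 'I_D * 'I_D}|) :=
  matfun (fun c t => motion_test t c).

Lemma card_motion_basis_le_rank : (#|motion_basis D| <= \rank (motion_mx std_placement))%N.
Proof.
rewrite -mxrank_tr; apply: leq_trans (mxrankM_maxl _ motion_test_mx).
apply: card_le_mxrank_delta => s s_basis.
have <- : row (enum_rank s) (motion_mx std_placement)^T *m motion_test_mx =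
          delta_mx 0 (enum_rank s).
  apply: entryP => t; rewrite entry_mulmx entry_delta -(motion_test_dual t s_basis).
  by apply: eq_bigr => c _; rewrite /entry !mxE !enum_rankK.
by rewrite submxMr // row_sub.
Qed.

End StandardPlacement.

(* The infinitesimal rotations and translations annihilate every row of the
   rigidity matrix, and at a generic placement they span a space of dimension
   binom(D+1, 2). *)
Lemma rig_rank_add_binom_le (R : realType) (W : finType) D (q : W -> 'I_D -> R)
    (F : {set {set W}}) :
  generic q -> is_edge_set F -> (D <= #|W|)%N ->
  (rig_rank q F + 'C(D.+1, 2) <= D * #|W|)%N.
Proof.
move=> gen_q edgeF D_le_W; rewrite rig_rankE.
have rows_ker : (rowspan (rig_vec q) F <= kermx (motion_mx q))%MS.
  apply/rowspan_subP => e eF; rewrite sub_kermx.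
  by have /eqP/cards2P[a [b [ab ->]]] := edgeF e eF; rewrite rig_vec_pair_motion_mx.
have motions_rank : ('C(D.+1, 2) <= \rank (motion_mx q))%N.
  have [D0|D_gt0] := posnP D; first by rewrite (_ : 'C(D.+1, 2) = 0%N) // D0.
  rewrite -card_motion_basis; apply: leq_trans (card_motion_basis_le_rank R D_gt0 D_le_W) _.
  by rewrite -(eval_motion_mx q) -eval_motion_mx mxrank_eval_le_generic.
have := mxrankS rows_ker; rewrite mxrank_ker.
have := rank_leq_row (motion_mx q).
have : #|{: W * 'I_D}| = (D * #|W|)%N by rewrite card_prod card_ord mulnC.
move: motions_rank; rewrite /rowrank.
move: #|{: W * 'I_D}| (\rank (motion_mx q)) (\rank (rowspan _ F)) => N m r; lia.
Qed.

Section ConeEdges.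
Variable V : finType.
Implicit Types (U : {set V}) (F : {set {set V}}).

Definition lift_edges F : {set {set option V}} := [set Some @: (e : {set V}) | e in F].
Definition apex_edge (u : V) : {set option V} := [set Some u; None].
Definition cone_on U F := lift_edges F :|: [set apex_edge u | u in U].

Lemma lift_pair (a b : V) : Some @: [set a; b] = [set Some a; Some b].
Proof. by rewrite imsetU1 imset_set1. Qed.

Lemma apex_edge_inj : injective apex_edge.
Proof.
move=> u v /setP /(_ (Some u)); rewrite !inE eqxx /= orbF.
by move=> /esym /eqP [].
Qed.

Lemma lift_edge_neq_apex (e : {set V}) u : Some @: e != apex_edge u.
Proof.
by apply/eqP => /setP /(_ None); rewrite !inE orbT => /imsetP[x].
Qed.

Lemma card_lift_edges F : #|lift_edges F| = #|F|.
Proof. by rewrite card_imset //; apply: imset_inj; apply: Some_inj. Qed.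

Lemma card_cone_on U F : #|cone_on U F| = (#|F| + #|U|)%N.
Proof.
rewrite cardsU card_lift_edges card_imset; last exact: apex_edge_inj.
suff -> : lift_edges F :&: [set apex_edge u | u in U] = set0 by rewrite cards0 subn0.
apply/setP => x; rewrite !inE; apply/negP => /andP[/imsetP[e _ ->] /imsetP[u _ /eqP]].
by rewrite (negbTE (lift_edge_neq_apex e u)).
Qed.

Lemma cone_edgesE F : cone_edges F = cone_on setT F.
Proof.
apply/setP => e; rewrite !inE; congr (_ || _).
by apply/imsetP/imsetP => -[u _ ->]; exists u.
Qed.

Lemma cone_onS U U' F F' :
  U \subset U' -> F \subset F' -> cone_on U F \subset cone_on U' F'.
Proof. by move=> UU' FF'; rewrite setUSS ?imsetS. Qed.

Lemma mem_lift_edges F e : e \in F -> Some @: e \in lift_edges F.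
Proof. by move=> eF; apply/imsetP; exists e. Qed.

Lemma mem_cone_lift U F e : e \in F -> Some @: e \in cone_on U F.
Proof. by move=> eF; rewrite in_setU mem_lift_edges. Qed.

Lemma mem_cone_apex U F u : (apex_edge u \in cone_on U F) = (u \in U).
Proof.
rewrite in_setU (mem_imset _ _ apex_edge_inj) orbC; case: (u \in U) => //=.
by apply/imsetP => -[e _ /eqP]; rewrite eq_sym (negbTE (lift_edge_neq_apex _ _)).
Qed.

Lemma cone_onP U F e : e \in cone_on U F ->
  (exists2 e', e' \in F & e = Some @: e') \/ (exists2 u, u \in U & e = apex_edge u).
Proof. by rewrite in_setU => /orP[] /imsetP[x xin ->]; [left|right]; exists x. Qed.

Lemma is_edge_set_cone_on U F : is_edge_set F -> is_edge_set (cone_on U F).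
Proof.
move=> edgeF e /cone_onP[[e' /edgeF card_e' ->]|[u _ ->]]; last by rewrite cards2.
by rewrite card_imset //; apply: Some_inj.
Qed.

End ConeEdges.

Section ConeLowerBound.
Variables (R : realType) (V : finType) (d : nat).
Implicit Types (p : V -> 'I_d -> R) (U : {set V}) (F : {set {set V}}).

Definition lift_placement p (x : option V) (j : 'I_d.+1) : R :=
  if x is Some x then (if unlift ord_max j is Some i then p x i else 1) else 0.

Definition height_mx : 'M[R]_(#|{: option V * 'I_d.+1}|, #|{: V}|) :=
  select_mx (fun u => (Some u, ord_max)).
Definition base_mx : 'M[R]_(#|{: option V * 'I_d.+1}|, #|{: V * 'I_d}|) :=
  select_mx (fun k => (Some k.1, lift ord_max k.2)).

Lemma lift_edge_height_mx p a b : a != b ->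
  rig_vec (lift_placement p) (Some @: [set a; b]) *m height_mx = 0.
Proof.
move=> ab; apply: entry_eq0 => u.
rewrite entry_select lift_pair entry_rig_vec_pair ?(inj_eq Some_inj) //= unlift_none.
by rewrite subrr; case: ifP => //; case: ifP.
Qed.

Lemma lift_edge_base_mx p a b : a != b ->
  rig_vec (lift_placement p) (Some @: [set a; b]) *m base_mx = rig_vec p [set a; b].
Proof.
move=> ab; apply: entryP => -[x i].
by rewrite entry_select lift_pair !entry_rig_vec_pair ?(inj_eq Some_inj) //= liftK.
Qed.

Lemma apex_edge_height_mx p u :
  rig_vec (lift_placement p) (apex_edge u) *m height_mx = delta_mx 0 (enum_rank u).
Proof.
apply: entryP => v; rewrite entry_select entry_delta entry_rig_vec_pair //=.
by rewrite (inj_eq Some_inj) unlift_none; case: (v == u); rewrite ?subr0.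
Qed.

(* At [lift_placement p] (base at height 1, apex at the origin) the last
   coordinates of the base vertices see the apex edges as unit vectors and kill
   the lifted edges, whose remaining coordinates are the rows of p. *)
Lemma rig_rank_cone_ge p (q : option V -> 'I_d.+1 -> R) U F :
  generic q -> is_edge_set F -> (rig_rank p F + #|U| <= rig_rank q (cone_on U F))%N.
Proof.
move=> gen_q edgeF; apply: leq_trans (rig_rank_le_generic (lift_placement p) _ gen_q).
rewrite !rig_rankE /rowrank -(mxrank_mul_ker _ height_mx) addnC leq_add //.
  apply: card_le_mxrank_delta => u uU; rewrite -(apex_edge_height_mx p u) submxMr //.
  by rewrite rowspan_sup ?mem_cone_apex.
set X := rowspan _ (cone_on U F).
pose L := rowspan (rig_vec (lift_placement p)) (lift_edges F).
have LX : (L <= X)%MS by rewrite rowspanS ?subsetUl.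
have L_ker : (L <= kermx height_mx)%MS.
  apply/rowspan_subP => _ /imsetP[e eF ->]; rewrite sub_kermx.
  by have /eqP/cards2P[a [b [ab ->]]] := edgeF e eF; rewrite lift_edge_height_mx.
have : (rowspan (rig_vec p) F <= L *m base_mx)%MS.
  apply/rowspan_subP => e eF; have /eqP/cards2P[a [b [ab def_e]]] := edgeF e eF.
  by rewrite def_e -lift_edge_base_mx // submxMr // rowspan_sup // -def_e mem_lift_edges.
move/mxrankS/leq_trans; apply; apply: leq_trans (mxrankM_maxl _ _) _.
by rewrite mxrankS // sub_capmx LX L_ker.
Qed.

End ConeLowerBound.

Section ConeUpperBound.
Variables (R : realType) (V : finType) (d : nat) (q : option V -> 'I_d.+1 -> R).

Definition apex_offset x j := q (Some x) j - q None j.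
Definition apex_height x := apex_offset x ord_max.

(* Central projection from the apex onto the hyperplane of last coordinate
   [q None ord_max + 1], read in the first d coordinates relative to the apex. *)
Definition central_proj x i := apex_offset x (lift ord_max i) / apex_height x.

Hypothesis apex_height_neq0 : forall x, apex_height x != 0.
Implicit Types U : {set V}.

Lemma q_Some_lift x i :
  q (Some x) (lift ord_max i) = q None (lift ord_max i) + central_proj x i * apex_height x.
Proof. by rewrite /central_proj divfK // /apex_offset addrC subrK. Qed.

Lemma q_Some_max x : q (Some x) ord_max = q None ord_max + apex_height x.
Proof. by rewrite /apex_height /apex_offset addrC subrK. Qed.

Definition cproj_mx : 'M[R]_(#|{: option V * 'I_d.+1}|, #|{: V * 'I_d}|) :=
  matfun (fun c k => apex_height k.1 * ((c == (Some k.1, lift ord_max k.2))%:R -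
                                         central_proj k.1 k.2 * (c == (Some k.1, ord_max))%:R)).

Lemma entry_cproj_mx w k : entry (w *m cproj_mx) k =
  apex_height k.1 *
    (entry w (Some k.1, lift ord_max k.2) - central_proj k.1 k.2 * entry w (Some k.1, ord_max)).
Proof.
have ne : (Some k.1, lift ord_max k.2) != (Some k.1, ord_max).
  by rewrite xpair_eqE eqxx /= eq_sym neq_lift.
rewrite entry_mulmx (sum_supported2 ne); last first.
  by move=> c /negbTE -> /negbTE ->; rewrite mulr0 subr0 !mulr0.
by rewrite eqxx (negbTE ne) eq_sym (negbTE ne) eqxx /=; ring.
Qed.

Lemma lift_edge_cproj_mx a b : a != b ->
  rig_vec q (Some @: [set a; b]) *m cproj_mx =
  (apex_height a * apex_height b) *: rig_vec central_proj [set a; b].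
Proof.
move=> ab; apply: entryP => -[x i].
rewrite entry_cproj_mx entryZ lift_pair !entry_rig_vec_pair ?(inj_eq Some_inj) //=.
case: (eqVneq x a) => [->|_] /=; first by rewrite !q_Some_lift !q_Some_max; ring.
case: (eqVneq x b) => [->|_] /=; last by rewrite !(mulr0, subrr).
by rewrite !q_Some_lift !q_Some_max; ring.
Qed.

Lemma apex_edge_cproj_mx u : rig_vec q (apex_edge u) *m cproj_mx = 0.
Proof.
apply: entry_eq0 => -[x i]; rewrite entry_cproj_mx !entry_rig_vec_pair //=.
rewrite (inj_eq Some_inj); case: (eqVneq x u) => [->|_] /=; last by rewrite !(mulr0, subrr).
by rewrite !q_Some_lift !q_Some_max; ring.
Qed.

(* [w *m zero_sum_mx U = 0] iff w vanishes at the base vertices outside U and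
   each of its d+1 coordinate sums is zero. *)
Definition zero_sum_mx (U : {set V}) :
    'M[R]_(#|{: option V * 'I_d.+1}|, #|{: (V * 'I_d.+1) + 'I_d.+1}|) :=
  matfun (fun c k => match k with
    | inl xj => ((xj.1 \notin U) && (c == (Some xj.1, xj.2)))%:R
    | inr j => (c.2 == j)%:R end).

Lemma entry_zero_sum_mx_inl U w x j :
  entry (w *m zero_sum_mx U) (inl (x, j)) = (x \notin U)%:R * entry w (Some x, j).
Proof.
rewrite entry_mulmx (sum_supported1 (c1 := (Some x, j))) /= ?eqxx ?andbT 1?mulrC //.
by move=> c /negbTE ->; rewrite andbF mulr0.
Qed.

Lemma entry_zero_sum_mx_inr U w j :
  entry (w *m zero_sum_mx U) (inr j) = \sum_y entry w (y, j).
Proof.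
rewrite entry_mulmx sum_pair; apply: eq_bigr => y _.
rewrite (sum_supported1 (c1 := j)) /= ?eqxx ?mulr1 // => j' /negbTE ->.
by rewrite mulr0.
Qed.

Lemma rig_vec_zero_sum_mx U (a b : option V) : a != b ->
  oapp (mem U) true a -> oapp (mem U) true b -> rig_vec q [set a; b] *m zero_sum_mx U = 0.
Proof.
move=> ab aU bU; apply: entry_eq0 => -[[x j]|j].
  rewrite entry_zero_sum_mx_inl; have [xU|xU] := boolP (x \in U); first by rewrite mul0r.
  have outside c : oapp (mem U) true c -> (Some x == c) = false.
    by case: c => [c|] //= cU; apply: contraNF xU => /eqP[->].
  by rewrite entry_rig_vec_pair // !outside // mulr0.
rewrite entry_zero_sum_mx_inr (sum_supported2 ab) => [|c ca cb].
  by rewrite !entry_rig_vec_pair // eqxx eq_sym (negbTE ab) eqxx; ring.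
by rewrite entry_rig_vec_pair // (negbTE ca) (negbTE cb).
Qed.

Lemma entry_ker_cproj_zero_sum U w x j : w *m cproj_mx = 0 -> w *m zero_sum_mx U = 0 ->
  entry w (Some x, j) =
  if x \in U then entry w (Some x, ord_max) / apex_height x * apex_offset x j else 0.
Proof.
move=> wP wZ; case: ifP => xU.
  case: (unliftP ord_max j) => [i ->|->]; last by rewrite divfK.
  have /eqP := congr1 (fun w => entry w (x, i)) wP; rewrite entry_cproj_mx entry0.
  rewrite mulf_eq0 (negbTE (apex_height_neq0 x)) /= subr_eq0 => /eqP ->.
  by rewrite /central_proj; ring.
have := congr1 (fun w => entry w (inl (x, j))) wZ.
by rewrite entry_zero_sum_mx_inl xU mul1r entry0.
Qed.

(* A row killed by cproj_mx is, at each base vertex x, a multiple of q x - q None;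
   zero_sum_mx makes it vanish off U and determines its entries at the apex. *)
Lemma ker_cproj_zero_sum U w : w *m cproj_mx = 0 -> w *m zero_sum_mx U = 0 ->
  w = \sum_(u in U) (entry w (Some u, ord_max) / apex_height u) *: rig_vec q (apex_edge u).
Proof.
move=> wP wZ; apply: entryP => -[y j]; rewrite entry_sum.
under eq_bigr => u _ do rewrite entryZ entry_rig_vec_pair //.
case: y => [x|] /=.
  rewrite (entry_ker_cproj_zero_sum _ _ wP wZ); case: ifP => xU.
    rewrite (bigD1 x) //= eqxx big1 ?addr0 // => u /andP[_ ux].
    by rewrite (inj_eq Some_inj) eq_sym (negbTE ux) mulr0.
  rewrite big1 // => u uU; rewrite (inj_eq Some_inj).
  by have [xu|] := eqVneq x u; [rewrite xu uU in xU | rewrite mulr0].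
have sum_base : \sum_x entry w (Some x, j) =
    \sum_(u in U) entry w (Some u, ord_max) / apex_height u * apex_offset u j.
  rewrite (bigID (mem U)) /= [X in _ + X]big1 ?addr0 => [|x /negbTE xU].
    by apply: eq_bigr => u uU; rewrite (entry_ker_cproj_zero_sum _ _ wP wZ) uU.
  by rewrite (entry_ker_cproj_zero_sum _ _ wP wZ) xU.
have := congr1 (fun w => entry w (inr j)) wZ.
rewrite entry_zero_sum_mx_inr entry0 sum_option sum_base => /eqP; rewrite addr_eq0 => /eqP ->.
by rewrite -sumrN; apply: eq_bigr => u _; rewrite /apex_offset; ring.
Qed.

End ConeUpperBound.

Arguments zero_sum_mx {R V d} U.

Lemma apex_height_generic (R : realType) (V : finType) d (q : option V -> 'I_d.+1 -> R) :
  generic q -> forall x, apex_height q x != 0.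
Proof.
move=> gen_q x.
have ne : enum_rank (None : option V, @ord_max d) != enum_rank (Some x, ord_max).
  by rewrite (inj_eq enum_rank_inj).
have /gen_q : sym_placement (Some x) ord_max - sym_placement None (@ord_max d) != 0.
  apply/eqP => /(congr1 (mcoeff U_(enum_rank (Some x, @ord_max d)))).
  by rewrite mcoeffB !mcoeffXU eqxx (negbTE ne) mcoeff0 subr0 => /eqP; rewrite oner_eq0.
by rewrite rmorphB /= !eval_sym_placement.
Qed.

Section ConeRank.
Variables (R : realType) (V : finType) (d : nat).
Variables (p : V -> 'I_d -> R) (q : option V -> 'I_d.+1 -> R).
Hypotheses (gen_p : generic p) (gen_q : generic q).
Implicit Types (U : {set V}) (F : {set {set V}}).

Lemma cone_span_cproj_le U F : is_edge_set F ->
  (\rank (rowspan (rig_vec q) (cone_on U F) *m cproj_mx q) <= rig_rank p F)%N.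
Proof.
move=> edgeF; have height_neq0 := apex_height_generic gen_q.
apply: leq_trans (rig_rank_le_generic (central_proj q) F gen_p).
rewrite rig_rankE /rowrank; set P := rowspan _ F.
suff : (rowspan (rig_vec q) (cone_on U F) <= kermx (cproj_mx q *m cokermx P))%MS.
  by rewrite sub_kermx mulmxA -submxE => /mxrankS.
apply/rowspan_subP => _ /cone_onP[[e eF ->]|[u uU ->]]; rewrite sub_kermx mulmxA.
  have /eqP/cards2P[a [b [ab def_e]]] := edgeF e eF.
  rewrite def_e lift_edge_cproj_mx // -scalemxAl.
  have : (rig_vec (central_proj q) [set a; b] <= P)%MS by rewrite -def_e rowspan_sup.
  by rewrite submxE => /eqP ->; rewrite scaler0.
by rewrite apex_edge_cproj_mx // mul0mx.
Qed.

Lemma cone_span_ker_cproj_le U F : is_edge_set F -> (forall e, e \in F -> e \subset U) ->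
  (\rank (rowspan (rig_vec q) (cone_on U F) :&: kermx (cproj_mx q)) <= #|U|)%N.
Proof.
move=> edgeF FU; set X := rowspan _ (cone_on U F).
have X_ker : (X <= kermx (zero_sum_mx U))%MS.
  apply/rowspan_subP => _ /cone_onP[[e eF ->]|[u uU ->]]; rewrite sub_kermx.
    have /eqP/cards2P[a [b [ab def_e]]] := edgeF e eF.
    have /subsetP := FU e eF; rewrite def_e lift_pair => abU.
    by rewrite rig_vec_zero_sum_mx ?(inj_eq Some_inj) //= abU // !inE eqxx ?orbT.
  by rewrite rig_vec_zero_sum_mx.
apply: leq_trans (_ : rowrank (rig_vec q) [set apex_edge u | u in U] <= _)%N.
  apply/mxrankS/row_subP => i; set w := row i _.
  have wX : (w <= X)%MS := submx_trans (row_sub i _) (capmxSl _ _).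
  have wP : w *m cproj_mx q = 0.
    by apply/eqP; rewrite -sub_kermx (submx_trans (row_sub i _) (capmxSr _ _)).
  have wZ : w *m zero_sum_mx U = 0 by apply/eqP; rewrite -sub_kermx (submx_trans wX).
  rewrite (ker_cproj_zero_sum (apex_height_generic gen_q) wP wZ) summx_sub // => u uU.
  by rewrite scalemx_sub // rowspan_sup // imset_f.
exact: leq_trans (rowrank_le_card _ _) (leq_imset_card _ _).
Qed.

(* Split the span of the cone rows by the projection from the apex: the image
   is controlled by the generic projected placement, the kernel by the apex
   edges. *)
Lemma rig_rank_cone_le U F : is_edge_set F -> (forall e, e \in F -> e \subset U) ->
  (rig_rank q (cone_on U F) <= rig_rank p F + #|U|)%N.
Proof.
move=> edgeF FU; rewrite rig_rankE /rowrank -(mxrank_mul_ker _ (cproj_mx q)).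
by rewrite leq_add ?cone_span_cproj_le ?cone_span_ker_cproj_le.
Qed.

Lemma rig_rank_cone U F : is_edge_set F -> (forall e, e \in F -> e \subset U) ->
  rig_rank q (cone_on U F) = (rig_rank p F + #|U|)%N.
Proof.
by move=> edgeF FU; apply/eqP; rewrite eqn_leq rig_rank_cone_le ?rig_rank_cone_ge.
Qed.

End ConeRank.

Lemma binom2_add_binom2 d n : (d <= n <= d.+1)%N -> ('C(n, 2) + 'C(d.+1, 2) = d * n)%N.
Proof.
have bin2_double m : ('C(m, 2) * 2 = m * m.-1)%N.
  by have := bin_ffact m 2; rewrite ffactnS ffactn1.
move=> /andP[dn nd]; have := bin2_double n; have := bin2_double d.+1.
have [->|->] : n = d \/ n = d.+1 by lia.
all: nia.
Qed.

Section ConeSets.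
Variable V : finType.

Lemma card_complete_edge_set (F : {set {set V}}) : is_edge_set F ->
  (forall x y : V, x != y -> [set x; y] \in F) -> #|F| = 'C(#|V|, 2).
Proof.
move=> edgeF completeF; rewrite -card_draws; apply: eq_card => e.
rewrite inE; apply/idP/idP => [/edgeF -> //|/cards2P[x [y [xy ->]]]].
exact: completeF.
Qed.

Lemma complete_cone_on (U : {set V}) (F : {set {set V}}) :
  (forall x y : option V, x != y -> [set x; y] \in cone_on U F) ->
  U = setT /\ forall x y : V, x != y -> [set x; y] \in F.
Proof.
move=> complete; split.
  by apply/setP => u; rewrite in_setT -(mem_cone_apex _ F); apply: complete.
move=> x y xy; have := complete (Some x) (Some y); rewrite (inj_eq Some_inj) => /(_ xy).
case/cone_onP => [[e eF]|[u _]]; first by rewrite -lift_pair => /(imset_inj Some_inj) ->.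
by move=> /setP /(_ None); rewrite !inE orbT.
Qed.

Lemma cone_edges_setD (E : {set {set V}}) (T : {set {set option V}}) :
  T \subset [set apex_edge x | x : V] ->
  let S := [set x | apex_edge x \notin cone_edges E :\: T] in
  cone_edges E :\: T = cone_on (~: S) E /\ #|T| = #|S|.
Proof.
move=> T_apex S.
have memS x : (x \in S) = (apex_edge x \in T).
  by rewrite inE in_setD cone_edgesE mem_cone_apex in_setT andbT negbK.
have defT : T = [set apex_edge x | x in S].
  apply/setP => e; apply/idP/imsetP => [eT|[x xS ->]]; last by rewrite -memS.
  by have /imsetP[x _ def_e] := subsetP T_apex e eT; exists x; rewrite // memS -def_e.
split; last by rewrite defT card_imset //; apply: apex_edge_inj.
apply/setP => e; rewrite cone_edgesE in_setD !in_setU.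
have [/imsetP[e' _ ->]|not_lift] /= := boolP (e \in lift_edges E).
  rewrite andbT defT; apply/imsetP => -[x _ /eqP].
  by rewrite (negbTE (lift_edge_neq_apex _ _)).
apply/andP/imsetP => [[eT /imsetP[x _ def_e]]|[x xS ->]].
  by exists x; rewrite // inE memS -def_e.
by rewrite -memS -in_setC xS; split => //; apply: imset_f.
Qed.

End ConeSets.

Section ConeRigidity.
Variables (R : realType) (V : finType) (d : nat).
Variables (p : V -> 'I_d -> R) (q : option V -> 'I_d.+1 -> R).
Hypotheses (gen_p : generic p) (gen_q : generic q).
Variable E : {set {set V}}.
Hypothesis edgeE : is_edge_set E.
Implicit Types U : {set V}.

Lemma indep_del_vertices U : indep q (cone_on U E) -> indep p (del_vertices E (~: U)).
Proof.
set F := del_vertices E (~: U) => indepG.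
have FE : F \subset E by apply/subsetP => e; rewrite inE => /andP[].
have edgeF : is_edge_set F by move=> e /(subsetP FE) /edgeE.
have FU e : e \in F -> e \subset U by rewrite inE disjoints_subset setCK => /andP[].
have : indep q (cone_on U F).
  by move: indepG; rewrite !indepE => /rowfreeS; apply; apply: cone_onS.
by rewrite /indep (rig_rank_cone gen_p gen_q edgeF FU) card_cone_on => /addIn.
Qed.

(* The rank of G * v is squeezed between that of the rigid subgraph G' and the
   trivial-motion bound, and equals r_d(G) + |V| by the coning lemma. *)
Lemma rig_rank_cone_rigid U : (d <= #|V|)%N ->
  (rig_rank q (cone_on U E) + 'C(d.+2, 2) = d.+1 * #|V|.+1)%N ->
  (rig_rank p E + #|V|)%N = rig_rank q (cone_on U E).
Proof.
move=> d_le_n rankG.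
have := rig_rank_add_binom_le gen_q (is_edge_set_cone_on (U := setT) edgeE).
rewrite card_option ltnS => /(_ d_le_n).
have := rig_rankS q (cone_onS (subsetT U) (subxx E)).
rewrite (rig_rank_cone gen_p gen_q edgeE (fun e _ => subsetT e)) cardsT; lia.
Qed.

Lemma exists_circuit_through U s : s \notin U ->
  (rig_rank p E + #|V|)%N = rig_rank q (cone_on U E) ->
  exists C : {set {set V}}, [/\ C \subset E, circuit p C & exists2 e, e \in C & s \in e].
Proof.
move=> sU rankG; set E0 := [set e in E | s \notin e].
have E0E : E0 \subset E by apply/subsetP => e; rewrite inE => /andP[].
have edgeE0 : is_edge_set E0 by move=> e /(subsetP E0E) /edgeE.
have E0s e : e \in E0 -> e \subset ~: [set s].
  rewrite inE => /andP[_ se]; apply/subsetP => x xe; rewrite !inE.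
  by apply: contraNneq se => <-.
have G_sub : cone_on U E \subset cone_on (~: [set s]) E0 :|: lift_edges (E :\: E0).
  apply/subsetP => _ /cone_onP[[e eE ->]|[u uU ->]]; rewrite in_setU.
    have [se|se] := boolP (s \in e); first by rewrite mem_lift_edges ?orbT // !inE se eE.
    by rewrite mem_cone_lift // inE se eE.
  by rewrite mem_cone_apex !inE (memPn sU u uU).
have n_gt0 : (0 < #|V|)%N by apply/card_gt0P; exists s.
have : (rig_rank p E < rig_rank p E0 + #|E :\: E0|)%N.
  have := leq_trans (rig_rankS q G_sub) (rig_rankU _ _ _).
  rewrite (rig_rank_cone gen_p gen_q edgeE0 E0s) cardsC1 -rankG.
  have := rig_rank_le_card q (lift_edges (E :\: E0)); rewrite card_lift_edges; lia.
rewrite !rig_rankE => /(exists_circuit_outside E0E) [C [CE depC minC [e eC eE0]]].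
exists C; split => //; first by split=> [|C' /minC]; rewrite /dependent indepE.
by exists e => //; move: eE0; rewrite inE (subsetP CE e eC) negbK.
Qed.

End ConeRigidity.

Theorem lemma4p9 (R : realType) (d : nat) (V : finType)
  (E : {set {set V}}) (T : {set {set option V}})
  (p : V -> 'I_d -> R) (q : option V -> 'I_d.+1 -> R) :
  generic p -> generic q ->
  (1 <= d)%N -> (d <= #|V|)%N ->
  is_edge_set E ->
  T \subset [set [set Some x; None] | x : V] ->
  min_rigid q [set: option V] (cone_edges E :\: T) ->
  let S := [set x : V | [set Some x; None] \notin cone_edges E :\: T] in
  [/\ rigid p [set: V] E,
      (#|E|)%:Z = (d * #|V|)%:Z - ('C(d.+1, 2))%:Z + (#|T|)%:Z,
      indep p (del_vertices E S)
    & forall s, s \in S ->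
        exists C : {set {set V}},
          [/\ C \subset E, circuit p C & exists2 e, e \in C & s \in e]].
Proof.
move=> gen_p gen_q _ d_le_n edgeE T_apex [indepG rigidG] S.
have [defG cardT] : cone_edges E :\: T = cone_on (~: S) E /\ #|T| = #|S|.
  exact: cone_edges_setD.
rewrite defG in indepG rigidG.
have := indep_del_vertices gen_p gen_q edgeE indepG; rewrite setCK => indepGS.
have rankG : rig_rank q (cone_on (~: S) E) = (#|E| + #|~: S|)%N.
  by rewrite -card_cone_on; exact: indepG.
have cardS := cardsC S.
case: rigidG => [[completeG small]|].
  have [allU completeE] := complete_cone_on (fun x y => completeG x y (in_setT x) (in_setT y)).
  have S0 : S = set0 by rewrite -[S]setCK allU setCT.
  have cardE := card_complete_edge_set edgeE completeE.
  rewrite cardsT card_option in small.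
  have binomE : ('C(#|V|, 2) + 'C(d.+1, 2) = d * #|V|)%N.
    by apply: binom2_add_binom2; rewrite d_le_n -ltnS.
  split=> [||//|s]; last by rewrite S0 inE.
  - by left; split=> [x y _ _|]; [apply: completeE | rewrite cardsT].
  - by rewrite cardT S0 cards0 cardE; lia.
rewrite cardsT card_option => rankG'.
have rankE : (rig_rank p E + #|V|)%N = rig_rank q (cone_on (~: S) E).
  by apply: (rig_rank_cone_rigid gen_p gen_q edgeE d_le_n); lia.
have binomS : 'C(d.+2, 2) = ('C(d.+1, 2) + d.+1)%N by rewrite binS bin1.
split=> [||//|s sS].
- by right; rewrite cardsT; lia.
- by rewrite cardT; lia.
by apply: (exists_circuit_through gen_p gen_q edgeE _ rankE); rewrite in_setC negbK.
Qed.
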